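(* Let $a>b>0$ and let $E$ be the ellipse $\frac{x^2}{a^2}+\frac{y^2}{b^2}=1$. For a 3-periodic billiard orbit $T$ in $E$, consider the Cosine Circle of the excentral triangle of $T$. Then this circle is the same for all 3-periodic orbits in $E$: its radius $r^*$ is constant, it is centered at the center $(0,0)$ of $E$, and it lies exterior to $E$ (i.e. $r^*>a$).
   Context: A 3-periodic billiard orbit in the ellipse $E$ is a nondegenerate triangle $P_1P_2P_3$ with all vertices on $E$ such that at each vertex $P_i$ the normal line to $E$ at $P_i$ bisects the interior angle of the triangle at $P_i$. The excentral triangle of $T$ has vertices at the three excenters of $T$. The Cosine Circle (second Lemoine circle) of a triangle $\Delta$ is the circle centered at the symmedian point $X_6$ of $\Delta$ passing through the six points where the three lines through $X_6$ parallel to the sides of the orthic triangle of $\Delta$ (the triangle of altitude feet) meet the sides of $\Delta$. *)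

From Stdlib Require Export Reals.
Open Scope R_scope.

Definition pt : Type := (R * R)%type.
Definition padd (p q : pt) : pt := (fst p + fst q, snd p + snd q).
Definition psub (p q : pt) : pt := (fst p - fst q, snd p - snd q).
Definition pscale (k : R) (p : pt) : pt := (k * fst p, k * snd p).
Definition dot (p q : pt) : R := fst p * fst q + snd p * snd q.
Definition cross (p q : pt) : R := fst p * snd q - snd p * fst q.
Definition norm (p : pt) : R := sqrt (dot p p).
Definition dist (p q : pt) : R := norm (psub p q).

Definition on_ellipse (a b : R) (P : pt) : Prop :=
  (fst P)^2 / a^2 + (snd P)^2 / b^2 = 1.

Definition ellipse_normal (a b : R) (P : pt) : pt := (fst P / a^2, snd P / b^2).

Definition int_bisector_dir (P Q S : pt) : pt :=
  padd (pscale (/ dist Q P) (psub Q P)) (pscale (/ dist S P) (psub S P)).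

(* The normal line to E at P coincides with the internal angle bisector line
   at P (both pass through P, so it suffices that directions are parallel). *)
Definition normal_bisects (a b : R) (P Q S : pt) : Prop :=
  cross (ellipse_normal a b P) (int_bisector_dir P Q S) = 0.

Definition nondegenerate (P1 P2 P3 : pt) : Prop :=
  cross (psub P2 P1) (psub P3 P1) <> 0.

Definition is_3_periodic (a b : R) (P1 P2 P3 : pt) : Prop :=
  nondegenerate P1 P2 P3 /\
  on_ellipse a b P1 /\ on_ellipse a b P2 /\ on_ellipse a b P3 /\
  normal_bisects a b P1 P2 P3 /\
  normal_bisects a b P2 P3 P1 /\
  normal_bisects a b P3 P1 P2.

Definition excenter (A B C : pt) : pt :=
  let la := dist B C in let lb := dist C A in let lc := dist A B in
  pscale (/ (- la + lb + lc))
    (padd (padd (pscale (- la) A) (pscale lb B)) (pscale lc C)).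

Definition symmedian (A B C : pt) : pt :=
  let la2 := dot (psub B C) (psub B C) in
  let lb2 := dot (psub C A) (psub C A) in
  let lc2 := dot (psub A B) (psub A B) in
  pscale (/ (la2 + lb2 + lc2))
    (padd (padd (pscale la2 A) (pscale lb2 B)) (pscale lc2 C)).

Definition foot (A B C : pt) : pt :=
  padd B (pscale (dot (psub A B) (psub C B) / dot (psub C B) (psub C B))
                 (psub C B)).

Definition on_line (X P d : pt) : Prop := cross (psub X P) d = 0.

Definition meets_on_circle (c : pt) (r : R) (K HU HW V S : pt) : Prop :=
  (exists X, on_line X K (psub HW HU) /\ on_line X V (psub S V)) /\
  (forall X, on_line X K (psub HW HU) -> on_line X V (psub S V) -> dist X c = r).

(* The line parallel to the orthic side H_B H_C
   (antiparallel to BC) meets sides AB and AC, etc. *)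
Definition is_cosine_circle (A B C : pt) (c : pt) (r : R) : Prop :=
  let HA := foot A B C in let HB := foot B C A in let HC := foot C A B in
  let K := symmedian A B C in
  c = K /\
  meets_on_circle c r K HB HC A B /\ meets_on_circle c r K HB HC A C /\
  meets_on_circle c r K HC HA B C /\ meets_on_circle c r K HC HA B A /\
  meets_on_circle c r K HA HB C A /\ meets_on_circle c r K HA HB C B.

(* Since the normal at each vertex bisects the angle of the orbit, the tangents are the external
   bisectors: the excenter [E_i] is the pole of the opposite chord [P_j P_k] (the intersection of
   the tangents at [P_j] and [P_k]) and lies on the normal at [P_i]. Hence the orbit is the orthic
   triangle of its excentral triangle. The symmedian of the excentral triangle from [E_i] bisects
   the antiparallel [P_j P_k], and the line joining a pole to the midpoint of its chord passes
   through the center, so the symmedian point is the center [O].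
   The line through [O] parallel to [P_j P_k] meets the tangent at [P_k] at [w / (n_k . w)],
   [w = P_k - P_j], at squared distance [|w|^2 / (n_k . w)^2] from [O]. The bisector property and
   the symmetry [n_P . (Q - P) = n_Q . (P - Q)] make [(n_i . (P_j - P_i))^2 / |P_j - P_i|^2 = u]
   the same for the three sides. In the coordinates [(x/a, y/b)] the vertices lie on the unit
   circle and satisfy pairwise one bilinear relation, which forces
   [(a^2 - b^2)^2 u^2 + 2 (a^2 + b^2) u = 3]; so the squared radius is
   [1/u = (a^2 + b^2 + 2 sqrt (a^4 - a^2 b^2 + b^4)) / 3 > a^2]. *)

From Stdlib Require Import Lra Psatz.
Open Scope R_scope.

(** * Vectors in the plane *)

Definition nonzero (v : pt) : Prop := fst v <> 0 \/ snd v <> 0.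

Ltac unfold_vec := unfold nonzero, dot, cross, psub, padd, pscale in *; cbn [fst snd] in *.

Lemma sum_sqr_nonneg (x y : R) : 0 <= x * x + y * y.
Proof. pose proof (Rle_0_sqr x); pose proof (Rle_0_sqr y); unfold Rsqr in *; lra. Qed.

Lemma sum_sqr_pos (x y : R) : x <> 0 \/ y <> 0 -> 0 < x * x + y * y.
Proof. intros [H | H]; pose proof (Rsqr_pos_lt _ H); unfold Rsqr in *; nra. Qed.

Lemma sum_sqr_eq0 (x y : R) : x * x + y * y = 0 -> x = 0 /\ y = 0.
Proof.
  intros H. destruct (Req_dec x 0) as [Hx | Hx]; [destruct (Req_dec y 0) as [Hy | Hy] |].
  - auto.
  - pose proof (sum_sqr_pos x y (or_intror Hy)). lra.
  - pose proof (sum_sqr_pos x y (or_introl Hx)). lra.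
Qed.

Lemma mul_eq0_l (x y : R) : x <> 0 -> x * y = 0 -> y = 0.
Proof. intros Hx H. destruct (Rmult_integral _ _ H); [contradiction | assumption]. Qed.

Lemma dot_self_pos (v : pt) : nonzero v -> 0 < dot v v.
Proof. destruct v; unfold_vec; apply sum_sqr_pos. Qed.

Lemma psub_nonzero (P Q : pt) : P <> Q -> nonzero (psub P Q).
Proof.
  destruct P as [p1 p2], Q as [q1 q2]; unfold_vec; intros Hne.
  destruct (Req_dec p1 q1), (Req_dec p2 q2); subst; auto; lra.
Qed.

Lemma pt_eq_or_neq (P Q : pt) : P = Q \/ P <> Q.
Proof.
  destruct P as [p1 p2], Q as [q1 q2].
  destruct (Req_dec p1 q1), (Req_dec p2 q2); subst; [left; reflexivity | right; congruence ..].
Qed.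

Lemma eq_of_psub_eq0 (P Q : pt) : psub P Q = (0, 0) -> P = Q.
Proof.
  destruct P, Q; unfold psub; cbn [fst snd]; intros H; injection H as H1 H2; f_equal; lra.
Qed.

Lemma dot_psub_r (n X Y : pt) : dot n (psub X Y) = dot n X - dot n Y.
Proof. destruct n, X, Y; unfold_vec; ring. Qed.

Lemma dot_psub_l (u v n : pt) : dot (psub u v) n = dot u n - dot v n.
Proof. destruct n, u, v; unfold_vec; ring. Qed.

Lemma dot_padd_r (n u v : pt) : dot n (padd u v) = dot n u + dot n v.
Proof. destruct n, u, v; unfold_vec; ring. Qed.

Lemma dot_padd_l (u v n : pt) : dot (padd u v) n = dot u n + dot v n.
Proof. destruct n, u, v; unfold_vec; ring. Qed.

Lemma dot_pscale_r (n v : pt) (k : R) : dot n (pscale k v) = k * dot n v.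
Proof. destruct n, v; unfold_vec; ring. Qed.

Lemma dot_pscale_l (v n : pt) (k : R) : dot (pscale k v) n = k * dot v n.
Proof. destruct n, v; unfold_vec; ring. Qed.

Lemma dot_comm (u v : pt) : dot u v = dot v u.
Proof. destruct u, v; unfold_vec; ring. Qed.

Lemma dot_psub_swap (n X Y : pt) : dot n (psub X Y) = - dot n (psub Y X).
Proof. destruct n, X, Y; unfold_vec; ring. Qed.

Lemma dot_psub_self_swap (X Y : pt) : dot (psub X Y) (psub X Y) = dot (psub Y X) (psub Y X).
Proof. destruct X, Y; unfold_vec; ring. Qed.

Lemma cross_pscale_r (n v : pt) (k : R) : cross n (pscale k v) = k * cross n v.
Proof. destruct n, v; unfold_vec; ring. Qed.

Lemma cross_eq0_sym (u v : pt) : cross u v = 0 -> cross v u = 0.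
Proof. destruct u, v; unfold_vec; lra. Qed.

Lemma dist_sym (P Q : pt) : dist P Q = dist Q P.
Proof. unfold dist, norm. now rewrite dot_psub_self_swap. Qed.

Lemma dist_sqr (P Q : pt) : dist P Q * dist P Q = dot (psub P Q) (psub P Q).
Proof.
  unfold dist, norm. apply sqrt_sqrt. destruct P, Q; unfold_vec. apply sum_sqr_nonneg.
Qed.

Lemma dist_pos (P Q : pt) : P <> Q -> 0 < dist P Q.
Proof. intros H. apply sqrt_lt_R0, dot_self_pos, psub_nonzero, H. Qed.

Lemma sqr_of_eq_mul_dist (t k : R) (P Q : pt) :
  t = k * dist Q P -> t * t = k * k * dot (psub Q P) (psub Q P).
Proof. intros ->. rewrite <- dist_sqr. ring. Qed.

Lemma cross_eq0_of_dot_eq0 (m u v : pt) :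
  nonzero m -> dot m u = 0 -> dot m v = 0 -> cross u v = 0.
Proof.
  destruct m as [mx my], u as [ux uy], v as [vx vy]; unfold_vec; intros Hm H1 H2.
  destruct Hm as [Hm | Hm]; apply (mul_eq0_l _ _ Hm).
  - transitivity (vy * (mx * ux + my * uy) - uy * (mx * vx + my * vy));
      [ring | rewrite H1, H2; ring].
  - transitivity (ux * (mx * vx + my * vy) - vx * (mx * ux + my * uy));
      [ring | rewrite H1, H2; ring].
Qed.

Lemma dot_eq0_of_cross_eq0 (n z d : pt) :
  nonzero n -> cross n z = 0 -> dot n d = 0 -> dot z d = 0.
Proof.
  intros Hn H1 H2. apply (mul_eq0_l (dot n n)); [apply Rgt_not_eq, dot_self_pos, Hn |].
  destruct n as [nx ny], z as [zx zy], d as [dx dy]; unfold_vec.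
  transitivity ((nx * zx + ny * zy) * (nx * dx + ny * dy)
                + (nx * zy - ny * zx) * (nx * dy - ny * dx));
    [ring | rewrite H1, H2; ring].
Qed.

Lemma vec0_of_cross_dot_eq0 (n z : pt) :
  nonzero n -> cross n z = 0 -> dot n z = 0 -> z = (0, 0).
Proof.
  intros Hn H1 H2. pose proof (dot_self_pos n Hn) as Hpos.
  destruct n as [nx ny], z as [zx zy]; unfold_vec. f_equal.
  - apply (mul_eq0_l (nx * nx + ny * ny)); [lra |].
    transitivity (nx * (nx * zx + ny * zy) - ny * (nx * zy - ny * zx));
      [ring | rewrite H1, H2; ring].
  - apply (mul_eq0_l (nx * nx + ny * ny)); [lra |].
    transitivity (ny * (nx * zx + ny * zy) + nx * (nx * zy - ny * zx));
      [ring | rewrite H1, H2; ring].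
Qed.

Lemma cross_trans (v u w : pt) : nonzero w -> cross v w = 0 -> cross u w = 0 -> cross v u = 0.
Proof.
  intros Hw H1 H2. apply (cross_eq0_of_dot_eq0 (snd w, - fst w)).
  - destruct Hw; unfold_vec; [right; lra | left; assumption].
  - destruct v, w; unfold_vec; lra.
  - destruct u, w; unfold_vec; lra.
Qed.

Lemma origin_of_cross_eq0 (K U V : pt) :
  cross K U = 0 -> cross K V = 0 -> cross U V <> 0 -> K = (0, 0).
Proof.
  destruct K as [kx ky], U as [ux uy], V as [vx vy]; unfold_vec; intros H1 H2 H3.
  f_equal; apply (mul_eq0_l (ux * vy - uy * vx)); auto.
  - transitivity (ux * (kx * vy - ky * vx) - vx * (kx * uy - ky * ux));
      [ring | rewrite H1, H2; ring].
  - transitivity (uy * (kx * vy - ky * vx) - vy * (kx * uy - ky * ux));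
      [ring | rewrite H1, H2; ring].
Qed.

Lemma cross_eq0_of_line_through_origin (K E w : pt) : nonzero w ->
  cross (psub K E) w = 0 -> cross E w = 0 -> cross K E = 0.
Proof.
  intros Hw HKE HE. apply (cross_trans K E w); auto.
  destruct K, E, w; unfold_vec; lra.
Qed.

Lemma cross_psub_pscale_self (E w : pt) (k : R) :
  cross E w = 0 -> cross E (psub w (pscale k E)) = 0.
Proof. destruct E, w; unfold_vec; intros H; rewrite <- H; ring. Qed.

Lemma pscale_dot_of_cross_eq0 (v s : pt) :
  cross v s = 0 -> pscale (dot v v) s = pscale (dot v s) v.
Proof.
  destruct v as [vx vy], s as [sx sy]; unfold_vec; intros H. f_equal.
  - transitivity ((vx * sx + vy * sy) * vx - vy * (vx * sy - vy * sx)); [ring | rewrite H; ring].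
  - transitivity ((vx * sx + vy * sy) * vy + vx * (vx * sy - vy * sx)); [ring | rewrite H; ring].
Qed.

Lemma psub_origin (X : pt) : psub X (0, 0) = X.
Proof. destruct X; unfold_vec; f_equal; ring. Qed.

Lemma nonzero_of_dot_neq0 (n w : pt) : dot n w <> 0 -> nonzero n.
Proof.
  destruct n as [n1 n2], w; unfold nonzero; unfold_vec; intros H.
  destruct (Req_dec n1 0) as [-> | ]; [right; intros ->; apply H; ring | left; assumption].
Qed.

(** * Lines, feet of perpendiculars and triangles *)

Lemma dot_psub_eq0 (n X Y : pt) : dot n X = 1 -> dot n Y = 1 -> dot n (psub X Y) = 0.
Proof. rewrite dot_psub_r. lra. Qed.

Lemma collinear_of_dot_eq1 (n X Y Z : pt) : nonzero n ->
  dot n X = 1 -> dot n Y = 1 -> dot n Z = 1 -> cross (psub X Y) (psub Z Y) = 0.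
Proof. intros Hn HX HY HZ. apply (cross_eq0_of_dot_eq0 n); auto using dot_psub_eq0. Qed.

Lemma eq_of_dot_eq1_cross (n X Y : pt) : dot n X = 1 -> dot n Y = 1 -> cross X Y = 0 -> X = Y.
Proof.
  intros HX HY HXY.
  destruct (pt_eq_or_neq Y X) as [-> | Hne]; [reflexivity | exfalso].
  assert (Hpar : cross (psub Y X) X = 0) by (destruct X, Y; unfold_vec; lra).
  assert (Hperp : dot (psub Y X) n = 0) by (rewrite dot_comm; auto using dot_psub_eq0).
  pose proof (dot_eq0_of_cross_eq0 _ _ _ (psub_nonzero _ _ Hne) Hpar Hperp) as H0.
  rewrite dot_comm in H0. lra.
Qed.

Lemma eq_of_dot_eq1_normal (n E P : pt) : nonzero n ->
  dot n E = 1 -> dot n P = 1 -> cross n (psub E P) = 0 -> E = P.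
Proof.
  intros Hn HE HP Hc. apply eq_of_psub_eq0, (vec0_of_cross_dot_eq0 n); auto using dot_psub_eq0.
Qed.

Lemma foot_eq_of_perp (A B C P : pt) : B <> C ->
  cross (psub P B) (psub C B) = 0 -> dot (psub A P) (psub C B) = 0 -> foot A B C = P.
Proof.
  intros Hne Hon Hperp.
  pose proof (dot_self_pos _ (psub_nonzero _ _ (not_eq_sym Hne))) as Hpos.
  destruct A as [ax ay], B as [bx by_], C as [cx cy], P as [px py].
  unfold foot; unfold_vec.
  set (dx := cx - bx) in *. set (dy := cy - by_) in *.
  replace ((ax - bx) * dx + (ay - by_) * dy) with ((px - bx) * dx + (py - by_) * dy) by lra.
  set (t := (px - bx) * dx + (py - by_) * dy).
  assert (Ex : t * dx = (px - bx) * (dx * dx + dy * dy) - dy * ((px - bx) * dy - (py - by_) * dx))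
    by (unfold t; ring).
  assert (Ey : t * dy = (py - by_) * (dx * dx + dy * dy) + dx * ((px - bx) * dy - (py - by_) * dx))
    by (unfold t; ring).
  rewrite Hon, Rmult_0_r in Ex, Ey.
  f_equal; [replace (t / _ * dx) with (t * dx / (dx * dx + dy * dy)) by (field; lra)
           | replace (t / _ * dy) with (t * dy / (dx * dx + dy * dy)) by (field; lra)];
    [rewrite Ex | rewrite Ey]; field; lra.
Qed.

Lemma foot_eq_of_tangent (n P E1 E2 E3 : pt) : nonzero n -> E2 <> E3 ->
  dot n P = 1 -> dot n E2 = 1 -> dot n E3 = 1 -> cross n (psub E1 P) = 0 ->
  foot E1 E2 E3 = P.
Proof.
  intros Hn Hne HP H2 H3 Hnormal. apply foot_eq_of_perp; auto.
  - apply (collinear_of_dot_eq1 n); auto.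
  - apply (dot_eq0_of_cross_eq0 n); auto using dot_psub_eq0.
Qed.

(* The line through the origin parallel to [w] meets the line [dot n X = 1] at [w / (n.w)]. *)
Lemma meets_on_circle_origin (n V S HU HW : pt) (R : R) : 0 < R -> V <> S -> HU <> HW ->
  dot n V = 1 -> dot n S = 1 ->
  dot (psub HW HU) (psub HW HU)
  = R * (dot n (psub HW HU) * dot n (psub HW HU)) ->
  meets_on_circle (0, 0) (sqrt R) (0, 0) HU HW V S.
Proof.
  intros HR Hne Hne' HV HS Hratio. unfold meets_on_circle, on_line.
  pose proof (dot_self_pos _ (psub_nonzero _ _ (not_eq_sym Hne'))) as Hw.
  set (w := psub HW HU) in *. clearbody w. set (t := dot n w) in *.
  assert (Ht : t <> 0) by (intros E; rewrite E in Hratio; lra).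
  assert (Hn : nonzero n) by exact (nonzero_of_dot_neq0 _ _ Ht).
  assert (HX0 : dot n (pscale (/ t) w) = 1) by (rewrite dot_pscale_r; unfold t; field; exact Ht).
  split.
  - exists (pscale (/ t) w). split.
    + rewrite psub_origin. destruct w; unfold_vec; ring.
    + apply (collinear_of_dot_eq1 n); auto.
  - intros X Hpar Hside.
    assert (HX : dot n X = 1).
    { assert (Hperp : dot (psub X V) n = 0).
      { apply (dot_eq0_of_cross_eq0 (psub S V)).
        - apply psub_nonzero, not_eq_sym, Hne.
        - apply cross_eq0_sym, Hside.
        - rewrite dot_comm. apply dot_psub_eq0; auto. }
      rewrite dot_comm, dot_psub_r in Hperp. lra. }
    rewrite psub_origin in Hpar.
    assert (HXw : X = pscale (/ t) w).
    { apply (eq_of_dot_eq1_cross n); auto. rewrite cross_pscale_r, Hpar. ring. }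
    unfold dist, norm. rewrite psub_origin, HXw, dot_pscale_l, dot_pscale_r, Hratio.
    f_equal. fold t. field. exact Ht.
Qed.

Lemma dot_eq_of_cross_bisector (n u v : pt) (lu lv : R) :
  0 < lu -> 0 < lv -> lu * lu = dot u u -> lv * lv = dot v v -> cross u v <> 0 ->
  cross n (padd (pscale (/ lu) u) (pscale (/ lv) v)) = 0 -> dot n u * lv = dot n v * lu.
Proof.
  intros Hlu Hlv Eu Ev Huv Hbis.
  set (eu := pscale (/ lu) u) in *. set (ev := pscale (/ lv) v) in *.
  assert (Heu : dot eu eu = 1)
    by (unfold eu; rewrite dot_pscale_l, dot_pscale_r, <- Eu; field; lra).
  assert (Hev : dot ev ev = 1)
    by (unfold ev; rewrite dot_pscale_l, dot_pscale_r, <- Ev; field; lra).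
  assert (Hw : nonzero (padd eu ev)).
  { destruct u as [u1 u2], v as [v1 v2]; unfold eu, ev in *; unfold_vec.
    destruct (Req_dec (/ lu * u1 + / lv * v1) 0), (Req_dec (/ lu * u2 + / lv * v2) 0); auto.
    exfalso; apply Huv.
    replace u1 with (lu * (/ lu * u1)) by (field; lra).
    replace u2 with (lu * (/ lu * u2)) by (field; lra).
    replace (/ lu * u1) with (- (/ lv * v1)) by lra.
    replace (/ lu * u2) with (- (/ lv * v2)) by lra.
    field; lra. }
  assert (Hperp : dot (padd eu ev) (psub eu ev) = 0).
  { rewrite dot_padd_l, !dot_psub_r, (dot_comm ev eu). lra. }
  assert (Hn : dot n (psub eu ev) = 0).
  { apply (dot_eq0_of_cross_eq0 (padd eu ev)); auto.
    apply cross_eq0_sym, Hbis. }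
  rewrite dot_psub_r in Hn. unfold eu, ev in Hn. rewrite !dot_pscale_r in Hn.
  apply (Rmult_eq_reg_l (/ lu * / lv));
    [| apply Rgt_not_eq, Rmult_lt_0_compat; apply Rinv_0_lt_compat; lra].
  replace (/ lu * / lv * (dot n u * lv)) with (/ lu * dot n u) by (field; lra).
  replace (/ lu * / lv * (dot n v * lu)) with (/ lv * dot n v) by (field; lra).
  lra.
Qed.

Lemma nondegenerate_neq21 (P Q S : pt) : nondegenerate P Q S -> Q <> P.
Proof. unfold nondegenerate; intros H ->; apply H; destruct P, S; unfold_vec; ring. Qed.

Lemma nondegenerate_neq31 (P Q S : pt) : nondegenerate P Q S -> S <> P.
Proof. unfold nondegenerate; intros H ->; apply H; destruct P, Q; unfold_vec; ring. Qed.

Lemma nondegenerate_rot (P Q S : pt) : nondegenerate P Q S -> nondegenerate Q S P.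
Proof. unfold nondegenerate; destruct P, Q, S; unfold_vec; intros H E; apply H; lra. Qed.

Lemma dist_lt_add (A B C : pt) : nondegenerate A B C -> dist B C < dist C A + dist A B.
Proof.
  intros Hnd.
  pose proof (dist_pos _ _ (nondegenerate_neq21 _ _ _ Hnd)) as Hc. rewrite dist_sym in Hc.
  pose proof (dist_pos _ _ (nondegenerate_neq31 _ _ _ Hnd)) as Hb.
  pose proof (dist_sqr B C) as Ea. pose proof (dist_sqr C A) as Eb. pose proof (dist_sqr A B) as Ec.
  unfold nondegenerate in Hnd.
  set (la := dist B C) in *. set (lb := dist C A) in *. set (lc := dist A B) in *.
  clearbody la lb lc.
  destruct A as [ax ay], B as [bx by_], C as [cx cy]; unfold_vec.
  set (g := (bx - ax) * (cx - ax) + (by_ - ay) * (cy - ay)).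
  set (k := (bx - ax) * (cy - ay) - (by_ - ay) * (cx - ax)) in Hnd.
  assert (Hla : la * la = lb * lb + lc * lc - 2 * g) by (rewrite Ea, Eb, Ec; unfold g; ring).
  (* Lagrange's identity: |u|^2 |v|^2 = (u.v)^2 + (u x v)^2 > (u.v)^2 *)
  assert (Hlag : (lb * lc) * (lb * lc) = g * g + k * k)
    by (replace ((lb * lc) * (lb * lc)) with ((lb * lb) * (lc * lc)) by ring;
        rewrite Eb, Ec; unfold g, k; ring).
  assert (Hk : 0 < k * k) by (apply Rsqr_pos_lt in Hnd; exact Hnd).
  assert (Hbc : 0 < lb * lc) by (apply Rmult_lt_0_compat; lra).
  assert (Hg : - g < lb * lc)
    by (destruct (Rle_or_lt (lb * lc) (- g)); [nra | assumption]).
  destruct (Rle_or_lt (lb + lc) la); [nra | assumption].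
Qed.

Lemma excenter_denom_pos (A B C : pt) : nondegenerate A B C ->
  0 < - dist B C + dist C A + dist A B.
Proof. intros Hnd. pose proof (dist_lt_add _ _ _ Hnd). lra. Qed.

Lemma dot_excenter (n A B C : pt) : nondegenerate A B C ->
  dot n (excenter A B C) * (- dist B C + dist C A + dist A B)
  = - dist B C * dot n A + dist C A * dot n B + dist A B * dot n C.
Proof.
  intros Hnd. pose proof (excenter_denom_pos _ _ _ Hnd).
  unfold excenter. rewrite dot_pscale_r, !dot_padd_r, !dot_pscale_r. field. lra.
Qed.

Lemma excenter_sub_vertex (A B C : pt) : nondegenerate A B C ->
  psub (excenter A B C) A
  = pscale (dist C A * dist A B / (- dist B C + dist C A + dist A B)) (int_bisector_dir A B C).
Proof.
  intros Hnd. pose proof (excenter_denom_pos _ _ _ Hnd).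
  pose proof (dist_pos _ _ (nondegenerate_neq21 _ _ _ Hnd)) as Hc.
  pose proof (dist_pos _ _ (nondegenerate_neq31 _ _ _ Hnd)) as Hb.
  unfold excenter, int_bisector_dir. rewrite (dist_sym B A) in *.
  destruct A, B, C; unfold_vec. f_equal; field; lra.
Qed.

Lemma symmedian_rot (A B C : pt) : symmedian B C A = symmedian A B C.
Proof.
  unfold symmedian.
  rewrite (Rplus_comm (dot (psub C A) (psub C A) + dot (psub A B) (psub A B))), <- Rplus_assoc.
  destruct A, B, C; unfold pscale, padd; cbn [fst snd]. f_equal; ring.
Qed.

(* The chord joining the feet of the altitudes from [E2] and [E3] is antiparallel to [E2 E3],
   and the symmedian from [E1] bisects antiparallels. *)
Lemma symmedian_bisects_feet_chord (E1 E2 E3 : pt) : E2 <> E1 -> E3 <> E1 ->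
  cross (psub (symmedian E1 E2 E3) E1)
        (psub (padd (foot E2 E3 E1) (foot E3 E1 E2)) (pscale 2 E1)) = 0.
Proof.
  intros H2 H3.
  pose proof (dot_self_pos _ (psub_nonzero _ _ H2)) as L2.
  pose proof (dot_self_pos _ (psub_nonzero _ _ H3)) as L3.
  destruct E1 as [x1 y1], E2 as [x2 y2], E3 as [x3 y3]; unfold symmedian, foot; unfold_vec.
  pose proof (sum_sqr_nonneg (x2 - x3) (y2 - y3)).
  field; repeat split; nra.
Qed.

(** * The ellipse *)

Section Ellipse.

Variables a b : R.
Hypotheses (Ha : 0 < a) (Hb : 0 < b).

Let Ha2 : 0 < a ^ 2. Proof. apply pow_lt, Ha. Qed.
Let Hb2 : 0 < b ^ 2. Proof. apply pow_lt, Hb. Qed.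

(* [dot (ellipse_normal a b P) X = 1] is the tangent line at [P]. *)

Lemma ellipse_normal_dot_sym (P Q : pt) :
  dot (ellipse_normal a b P) Q = dot (ellipse_normal a b Q) P.
Proof. destruct P, Q; unfold ellipse_normal; unfold_vec; field; lra. Qed.

Lemma ellipse_normal_dot_self (P : pt) : on_ellipse a b P -> dot (ellipse_normal a b P) P = 1.
Proof.
  destruct P; unfold on_ellipse, ellipse_normal; unfold_vec; intros H; rewrite <- H; field; lra.
Qed.

Lemma ellipse_normal_nonzero (P : pt) : on_ellipse a b P -> nonzero (ellipse_normal a b P).
Proof.
  destruct P as [x y]; unfold on_ellipse, ellipse_normal; unfold_vec; intros H.
  destruct (Req_dec x 0) as [-> | Hx]; [right | left]; unfold Rdiv.
  - intros E. apply Rmult_integral in E as [-> | E]; [| pose proof (Rinv_0_lt_compat _ Hb2); lra].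
    unfold Rdiv in H. rewrite !pow_i in H by lia. lra.
  - intros E. apply Rmult_integral in E as [E | E];
      [lra | pose proof (Rinv_0_lt_compat _ Ha2); lra].
Qed.

Lemma eq_of_on_ellipse_tangent (P Q : pt) : on_ellipse a b P -> on_ellipse a b Q ->
  dot (ellipse_normal a b P) Q = 1 -> P = Q.
Proof.
  destruct P as [px py], Q as [qx qy]; unfold on_ellipse, ellipse_normal; unfold_vec.
  intros HP HQ HPQ.
  pose proof (Rinv_0_lt_compat _ Ha2) as Hia. pose proof (Rinv_0_lt_compat _ Hb2) as Hib.
  assert (E : (px - qx) * (px - qx) * / a ^ 2 + (py - qy) * (py - qy) * / b ^ 2 = 0)
    by (transitivity ((px ^ 2 / a ^ 2 + py ^ 2 / b ^ 2) + (qx ^ 2 / a ^ 2 + qy ^ 2 / b ^ 2)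
                      - 2 * (px / a ^ 2 * qx + py / b ^ 2 * qy)); [field; lra | lra]).
  pose proof (Rle_0_sqr (px - qx)) as Sx. pose proof (Rle_0_sqr (py - qy)) as Sy. unfold Rsqr in *.
  assert (Hx : (px - qx) * (px - qx) = 0) by nra.
  assert (Hy : (py - qy) * (py - qy) = 0) by nra.
  apply Rmult_integral in Hx as [Hx | Hx]; apply Rmult_integral in Hy as [Hy | Hy];
    f_equal; lra.
Qed.

Lemma ellipse_normal_sub_nonzero (P Q : pt) :
  P <> Q -> nonzero (psub (ellipse_normal a b P) (ellipse_normal a b Q)).
Proof.
  intros Hne. apply psub_nonzero. intros E. apply Hne.
  destruct P as [px py], Q as [qx qy]; unfold ellipse_normal in E; injection E as Ex Ey.
  f_equal; [apply (Rmult_eq_reg_r (/ a ^ 2)) | apply (Rmult_eq_reg_r (/ b ^ 2))];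
    auto; apply Rinv_neq_0_compat; lra.
Qed.

Lemma chord_normal_sym (P Q : pt) : on_ellipse a b P -> on_ellipse a b Q ->
  dot (ellipse_normal a b P) (psub Q P) = dot (ellipse_normal a b Q) (psub P Q).
Proof.
  intros HP HQ. rewrite !dot_psub_r, !ellipse_normal_dot_self, ellipse_normal_dot_sym; auto.
Qed.

Lemma chord_ratio_swap (r : R) (P Q : pt) :
  on_ellipse a b P -> on_ellipse a b Q ->
  dot (psub Q P) (psub Q P)
  = r * (dot (ellipse_normal a b P) (psub Q P) * dot (ellipse_normal a b P) (psub Q P)) ->
  dot (psub Q P) (psub Q P)
  = r * (dot (ellipse_normal a b Q) (psub Q P) * dot (ellipse_normal a b Q) (psub Q P)).
Proof.
  intros HP HQ H. rewrite H, (chord_normal_sym P Q HP HQ), (dot_psub_swap _ P Q). ring.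
Qed.

Lemma pole_midpoint_collinear (P Q E : pt) : on_ellipse a b P -> on_ellipse a b Q -> P <> Q ->
  dot (ellipse_normal a b P) E = 1 -> dot (ellipse_normal a b Q) E = 1 ->
  cross E (padd P Q) = 0.
Proof.
  intros HP HQ Hne HPE HQE.
  apply (cross_eq0_of_dot_eq0 (psub (ellipse_normal a b P) (ellipse_normal a b Q))).
  - apply ellipse_normal_sub_nonzero, Hne.
  - rewrite dot_psub_l. lra.
  - rewrite dot_psub_l, !dot_padd_r, !ellipse_normal_dot_self, (ellipse_normal_dot_sym P Q); auto.
    lra.
Qed.

Lemma midpoint_neq_pole (P Q E : pt) : on_ellipse a b P -> on_ellipse a b Q -> P <> Q ->
  dot (ellipse_normal a b P) E = 1 -> nonzero (psub (padd P Q) (pscale 2 E)).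
Proof.
  intros HP HQ Hne HE. apply psub_nonzero. intros Hmid. apply Hne, eq_of_on_ellipse_tangent; auto.
  assert (H2 : dot (ellipse_normal a b P) (padd P Q) = 2) by (rewrite Hmid, dot_pscale_r; lra).
  rewrite dot_padd_r, ellipse_normal_dot_self in H2; auto. lra.
Qed.

Lemma eq_of_tangent_normal (P Q E : pt) : on_ellipse a b P -> on_ellipse a b Q ->
  cross (ellipse_normal a b P) (psub E P) = 0 ->
  dot (ellipse_normal a b P) E = 1 -> dot (ellipse_normal a b Q) E = 1 -> P = Q.
Proof.
  intros HP HQ Hnormal HPE HQE.
  assert (E = P) as ->
    by (apply (eq_of_dot_eq1_normal (ellipse_normal a b P));
        auto using ellipse_normal_nonzero, ellipse_normal_dot_self).
  symmetry. apply eq_of_on_ellipse_tangent; auto.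
Qed.

End Ellipse.

(** * Chords of the unit circle *)

Lemma chord_midpoint_unit_circle (v Z2 Z3 : pt) (m : R) :
  dot Z2 Z2 = 1 -> dot Z3 Z3 = 1 -> Z2 <> Z3 -> dot v Z2 = m -> dot v Z3 = m ->
  pscale (dot v v) (padd Z2 Z3) = pscale (2 * m) v.
Proof.
  intros U2 U3 Hne H2 H3.
  replace (2 * m) with (dot v (padd Z2 Z3)) by (rewrite dot_padd_r; lra).
  apply pscale_dot_of_cross_eq0, cross_eq0_sym, (cross_eq0_of_dot_eq0 (psub Z2 Z3)).
  - apply psub_nonzero, Hne.
  - rewrite dot_psub_l, !dot_padd_r, (dot_comm Z3 Z2). lra.
  - rewrite dot_psub_l, (dot_comm Z2 v), (dot_comm Z3 v). lra.
Qed.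

Definition stretch (k : R) (Z : pt) : pt := ((1 - k) * fst Z, (1 + k) * snd Z).

Definition perp (v : pt) : pt := (- snd v, fst v).

(* Let [B Z Z' := dot (stretch k Z) Z'] and [Z2, Z3 = (s +- d) / 2]. The chord midpoint [s / 2]
   is [m v / |v|^2] and [d] is parallel to [perp v], so [4 m = B s s - B d d] is a function of
   [v] alone. *)
Lemma stretch_unit_chord (k m : R) (v Z2 Z3 : pt) : dot v v <> 0 ->
  dot Z2 Z2 = 1 -> dot Z3 Z3 = 1 -> Z2 <> Z3 ->
  dot v Z2 = m -> dot v Z3 = m -> dot (stretch k Z2) Z3 = m ->
  m * dot v v - 2 * m * m + dot (stretch k (perp v)) (perp v) = 0.
Proof.
  intros HN U2 U3 Hne H2 H3 H23.
  pose proof (chord_midpoint_unit_circle _ _ _ _ U2 U3 Hne H2 H3) as Hmid.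
  destruct v as [vx vy], Z2 as [x2 y2], Z3 as [x3 y3]; unfold stretch, perp in *; unfold_vec.
  injection Hmid as Mx My.
  set (N := vx * vx + vy * vy) in *.
  set (sx := x2 + x3) in *. set (sy := y2 + y3) in *.
  set (dx := x2 - x3). set (dy := y2 - y3).
  set (Bss := (1 - k) * (sx * sx) + (1 + k) * (sy * sy)).
  set (Bdd := (1 - k) * (dx * dx) + (1 + k) * (dy * dy)).
  set (Bvv := (1 - k) * (vx * vx) + (1 + k) * (vy * vy)).
  set (Bperp := (1 - k) * - vy * - vy + (1 + k) * vx * vx).
  assert (Hpol : 4 * m = Bss - Bdd) by (unfold Bss, Bdd, sx, sy, dx, dy; lra).
  assert (Hvd : vx * dx + vy * dy = 0) by (unfold dx, dy; lra).
  assert (Hdd : N * Bdd = (dx * dx + dy * dy) * Bperp).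
  { transitivity ((dx * dx + dy * dy) * Bperp - 2 * k * (dx * vx - dy * vy) * (vx * dx + vy * dy));
      [unfold N, Bdd, Bperp; ring | rewrite Hvd; ring]. }
  assert (Hss : N * (sx * sx + sy * sy) = 4 * m * m).
  { apply (Rmult_eq_reg_l N); auto.
    transitivity ((N * sx) * (N * sx) + (N * sy) * (N * sy));
      [ring | rewrite Mx, My; unfold N; ring]. }
  assert (Hunit : sx * sx + sy * sy + (dx * dx + dy * dy) = 4) by (unfold sx, sy, dx, dy; lra).
  assert (E1 : N * N * Bss = 4 * m * m * Bvv).
  { transitivity ((1 - k) * ((N * sx) * (N * sx)) + (1 + k) * ((N * sy) * (N * sy)));
      [unfold Bss; ring | rewrite Mx, My; unfold Bvv; ring]. }
  assert (E2 : N * N * Bdd = Bperp * (4 * N - 4 * m * m)).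
  { transitivity (N * (N * Bdd)); [ring | rewrite Hdd].
    replace (dx * dx + dy * dy) with (4 - (sx * sx + sy * sy)) by lra.
    transitivity (Bperp * (4 * N - N * (sx * sx + sy * sy))); [ring | rewrite Hss; ring]. }
  assert (Bsum : m * m * (Bvv + Bperp) = m * m * (2 * N)) by (unfold Bvv, Bperp, N; ring).
  apply (mul_eq0_l N); auto.
  transitivity ((N * N * (4 * m) - N * N * (Bss - Bdd)) / 4 + (N * N * Bss - 4 * m * m * Bvv) / 4
                - (N * N * Bdd - Bperp * (4 * N - 4 * m * m)) / 4
                + (m * m * (Bvv + Bperp) - m * m * (2 * N)));
    [field | rewrite <- Hpol, E1, E2, Bsum; field].
Qed.

Lemma stretch_three_points (k m : R) (Z1 Z2 Z3 : pt) :
  dot Z1 Z1 = 1 -> dot Z2 Z2 = 1 -> dot Z3 Z3 = 1 -> Z2 <> Z3 ->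
  dot (stretch k Z1) Z2 = m -> dot (stretch k Z1) Z3 = m -> dot (stretch k Z2) Z3 = m ->
  (1 - k * k + 2 * m) * (dot (stretch k Z1) Z1 - m) = 0.
Proof.
  intros U1 U2 U3 Hne H12 H13 H23.
  destruct (Req_dec (dot (stretch k Z1) (stretch k Z1)) 0) as [HN | HN].
  - (* the stretched [Z1] vanishes, which forces [k = 1] or [k = -1], and [m = 0] *)
    destruct Z1 as [x1 y1]; unfold stretch in *; unfold_vec.
    apply sum_sqr_eq0 in HN as [Vx Vy].
    assert (Hm : m = 0) by (rewrite <- H12, Vx, Vy; ring).
    assert (Hk : 1 - k * k = 0).
    { transitivity ((1 + k) * x1 * ((1 - k) * x1) + (1 - k) * y1 * ((1 + k) * y1)
                    - (1 - k * k) * (x1 * x1 + y1 * y1 - 1));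
        [ring | rewrite Vx, Vy, U1; ring]. }
    rewrite Hk, Hm. ring.
  - pose proof (stretch_unit_chord k m _ _ _ HN U2 U3 Hne H12 H13 H23) as H.
    destruct Z1 as [x1 y1]; unfold stretch, perp in *; unfold_vec.
    transitivity ((m * ((1 - k) * x1 * ((1 - k) * x1) + (1 + k) * y1 * ((1 + k) * y1)) - 2 * m * m
                   + ((1 - k) * - ((1 + k) * y1) * - ((1 + k) * y1)
                      + (1 + k) * ((1 - k) * x1) * ((1 - k) * x1)))
                  + m * (1 - k * k) * (x1 * x1 + y1 * y1 - 1));
      [ring | rewrite H, U1; ring].
Qed.

Lemma stretch_self_gt (a b u : R) (Z : pt) : 0 < a -> 0 < b -> 0 < u -> dot Z Z = 1 ->
  1 - u * (a ^ 2 + b ^ 2) < dot (stretch (u * (a ^ 2 - b ^ 2)) Z) Z.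
Proof.
  intros Ha Hb Hu HZ. destruct Z as [x y]; unfold stretch; unfold_vec.
  assert (Hpos : 0 < b ^ 2 * (x * x) + a ^ 2 * (y * y)).
  { pose proof (pow_lt _ 2 Ha). pose proof (pow_lt _ 2 Hb).
    destruct (Req_dec x 0) as [-> | Hx]; [| pose proof (Rsqr_pos_lt _ Hx)]; unfold Rsqr in *; nra. }
  replace ((1 - u * (a ^ 2 - b ^ 2)) * x * x + (1 + u * (a ^ 2 - b ^ 2)) * y * y)
    with (1 - u * (a ^ 2 + b ^ 2) + 2 * u * (b ^ 2 * (x * x) + a ^ 2 * (y * y))
          + (1 - u * (a ^ 2 + b ^ 2)) * (x * x + y * y - 1)) by ring.
  rewrite HZ. nra.
Qed.

(* Chord [ZpZq] of the unit circle: [1 - Zp.Zq] is half its squared length, and the quadratic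
   form [a^2 dx^2 + b^2 dy^2] of the chord factors through the same quantity. *)
Lemma unit_chord_stretch (a b u : R) (Zp Zq : pt) :
  dot Zp Zp = 1 -> dot Zq Zq = 1 -> Zp <> Zq ->
  (dot Zp Zq - 1) * (dot Zp Zq - 1)
  = u * (a ^ 2 * (fst Zq - fst Zp) ^ 2 + b ^ 2 * (snd Zq - snd Zp) ^ 2) ->
  dot (stretch (u * (a ^ 2 - b ^ 2)) Zp) Zq = 1 - u * (a ^ 2 + b ^ 2).
Proof.
  intros Up Uq Hne H.
  pose proof (dot_self_pos _ (psub_nonzero _ _ (not_eq_sym Hne))) as Hpos.
  destruct Zp as [xp yp], Zq as [xq yq]; unfold stretch; unfold_vec.
  set (g := 1 - (xp * xq + yp * yq)).
  set (h := xp * xq - yp * yq).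
  assert (Hg : 0 < g) by (unfold g; lra).
  assert (Hq : a ^ 2 * (xq - xp) ^ 2 + b ^ 2 * (yq - yp) ^ 2
               = g * ((a ^ 2 + b ^ 2) - (a ^ 2 - b ^ 2) * h)).
  { transitivity (g * ((a ^ 2 + b ^ 2) - (a ^ 2 - b ^ 2) * h)
                  + a ^ 2 * ((xp * xp + yp * yp - 1) * (yq * yq)
                             + (xq * xq + yq * yq - 1) * (1 - xp * xp))
                  + b ^ 2 * ((xp * xp + yp * yp - 1) * (xq * xq)
                             + (xq * xq + yq * yq - 1) * (1 - yp * yp)));
      [unfold g, h; ring | rewrite Up, Uq; ring]. }
  rewrite Hq in H.
  assert (Hgu : g = u * ((a ^ 2 + b ^ 2) - (a ^ 2 - b ^ 2) * h)).
  { apply (Rmult_eq_reg_l g); [| lra].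
    transitivity ((xp * xq + yp * yq - 1) * (xp * xq + yp * yq - 1));
      [unfold g; ring | rewrite H; ring]. }
  unfold g, h in Hgu. lra.
Qed.

Definition normalize (a b : R) (P : pt) : pt := (fst P / a, snd P / b).

Section Normalize.

Variables a b : R.
Hypotheses (Ha : 0 < a) (Hb : 0 < b).

Lemma on_ellipse_normalize (P : pt) :
  on_ellipse a b P -> dot (normalize a b P) (normalize a b P) = 1.
Proof. destruct P; unfold on_ellipse, normalize; unfold_vec; intros <-; field; lra. Qed.

Lemma ellipse_normal_dot_normalize (P Q : pt) :
  dot (ellipse_normal a b P) Q = dot (normalize a b P) (normalize a b Q).
Proof. destruct P, Q; unfold ellipse_normal, normalize; unfold_vec; field; lra. Qed.

Lemma normalize_neq (P Q : pt) : P <> Q -> normalize a b P <> normalize a b Q.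
Proof.
  intros Hne E. apply Hne. destruct P as [px py], Q as [qx qy].
  unfold normalize in E; cbn [fst snd] in E. injection E as Ex Ey.
  f_equal; [apply (Rmult_eq_reg_r (/ a)) | apply (Rmult_eq_reg_r (/ b))];
    auto; apply Rinv_neq_0_compat; lra.
Qed.

Lemma chord_normal_stretch (u : R) (P Q : pt) :
  on_ellipse a b P -> on_ellipse a b Q -> P <> Q ->
  dot (ellipse_normal a b P) (psub Q P) * dot (ellipse_normal a b P) (psub Q P)
  = u * dot (psub Q P) (psub Q P) ->
  dot (stretch (u * (a ^ 2 - b ^ 2)) (normalize a b P)) (normalize a b Q)
  = 1 - u * (a ^ 2 + b ^ 2).
Proof.
  intros HP HQ Hne H.
  apply unit_chord_stretch; auto using on_ellipse_normalize, normalize_neq.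
  rewrite dot_psub_r, ellipse_normal_dot_self, ellipse_normal_dot_normalize in H by auto.
  rewrite H. destruct P, Q; unfold normalize; unfold_vec. f_equal. field. lra.
Qed.

End Normalize.

(** * Billiard 3-periodics and their excentral triangle *)

Definition cosine_radius_sq (a b : R) : R :=
  (a ^ 2 + b ^ 2 + 2 * sqrt (a ^ 4 - a ^ 2 * b ^ 2 + b ^ 4)) / 3.

Section CosineRadius.

Variables a b : R.
Hypothesis Hb : 0 < b.

Let delta := sqrt (a ^ 4 - a ^ 2 * b ^ 2 + b ^ 4).

Let delta_sqr : delta * delta = a ^ 4 - a ^ 2 * b ^ 2 + b ^ 4.
Proof.
  apply sqrt_sqrt. pose proof (pow2_ge_0 (a ^ 2 - b ^ 2 / 2)). pose proof (pow2_ge_0 b). nra.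
Qed.

Lemma cosine_radius_sq_gt : a ^ 2 < cosine_radius_sq a b.
Proof.
  unfold cosine_radius_sq. fold delta.
  pose proof (sqrt_pos (a ^ 4 - a ^ 2 * b ^ 2 + b ^ 4)) as Hdelta. fold delta in Hdelta.
  pose proof (pow_lt b 2 Hb) as Hb2.
  (* [4 delta^2 = (2 a^2 - b^2)^2 + 3 b^4] *)
  assert (2 * a ^ 2 - b ^ 2 < 2 * delta).
  { destruct (Rle_or_lt (2 * delta) (2 * a ^ 2 - b ^ 2)); [| assumption].
    assert (0 < b ^ 2 * b ^ 2) by nra. nra. }
  lra.
Qed.

Lemma cosine_radius_sq_pos : 0 < cosine_radius_sq a b.
Proof. pose proof cosine_radius_sq_gt. pose proof (pow2_ge_0 a). lra. Qed.

(* [cosine_radius_sq] is the positive root of [3 R^2 - 2 (a^2 + b^2) R - (a^2 - b^2)^2], whose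
   reciprocal polynomial is the quadratic below. *)
Lemma cosine_radius_sq_inv (u : R) : 0 < u ->
  (a ^ 2 - b ^ 2) ^ 2 * u ^ 2 + 2 * (a ^ 2 + b ^ 2) * u - 3 = 0 ->
  u * cosine_radius_sq a b = 1.
Proof.
  intros Hu Hquad. pose proof cosine_radius_sq_pos as HR.
  assert (Hroot : 3 * cosine_radius_sq a b ^ 2 - 2 * (a ^ 2 + b ^ 2) * cosine_radius_sq a b
                  - (a ^ 2 - b ^ 2) ^ 2 = 0)
    by (unfold cosine_radius_sq; fold delta;
        transitivity (4 / 3 * (delta * delta - (a ^ 4 - a ^ 2 * b ^ 2 + b ^ 4)));
        [field | rewrite delta_sqr; ring]).
  set (R0 := cosine_radius_sq a b) in *. set (z := u * R0).
  assert (Hfac : (z - 1) * ((a ^ 2 - b ^ 2) ^ 2 * (z + 1) + 2 * (a ^ 2 + b ^ 2) * R0) = 0).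
  { transitivity (R0 ^ 2 * ((a ^ 2 - b ^ 2) ^ 2 * u ^ 2 + 2 * (a ^ 2 + b ^ 2) * u - 3)
                  + (3 * R0 ^ 2 - 2 * (a ^ 2 + b ^ 2) * R0 - (a ^ 2 - b ^ 2) ^ 2));
      [unfold z; ring | rewrite Hquad, Hroot; ring]. }
  assert (0 < z) by (unfold z; apply Rmult_lt_0_compat; assumption).
  assert (0 < (a ^ 2 - b ^ 2) ^ 2 * (z + 1) + 2 * (a ^ 2 + b ^ 2) * R0).
  { pose proof (pow2_ge_0 (a ^ 2 - b ^ 2)). pose proof (pow2_ge_0 a). nra. }
  apply Rmult_integral in Hfac as [Hz | Hz]; lra.
Qed.

End CosineRadius.

Lemma is_3_periodic_rot (a b : R) (P1 P2 P3 : pt) :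
  is_3_periodic a b P1 P2 P3 -> is_3_periodic a b P2 P3 P1.
Proof.
  intros (Hnd & H1 & H2 & H3 & B1 & B2 & B3). repeat split; auto using nondegenerate_rot.
Qed.

Lemma normal_bisects_ratio (a b : R) (P Q S : pt) :
  nondegenerate P Q S -> normal_bisects a b P Q S ->
  dot (ellipse_normal a b P) (psub Q P) * dist S P
  = dot (ellipse_normal a b P) (psub S P) * dist Q P.
Proof.
  intros Hnd Hbis. apply dot_eq_of_cross_bisector; auto using dist_sqr.
  - apply dist_pos, (nondegenerate_neq21 _ _ _ Hnd).
  - apply dist_pos, (nondegenerate_neq31 _ _ _ Hnd).
Qed.

Section OrbitExcenter.

Variables (a b : R) (A B C : pt).
Hypotheses (Ha : 0 < a) (Hb : 0 < b).
Hypothesis orbit : is_3_periodic a b A B C.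

Let Hnd : nondegenerate A B C. Proof. apply orbit. Qed.

Lemma orbit_excenter_tangent2 : dot (ellipse_normal a b B) (excenter A B C) = 1.
Proof.
  pose proof (excenter_denom_pos _ _ _ Hnd) as Hs.
  destruct orbit as (_ & _ & HB & _ & _ & NB & _).
  pose proof (normal_bisects_ratio _ _ _ _ _ (nondegenerate_rot _ _ _ Hnd) NB) as R.
  rewrite !dot_psub_r, ellipse_normal_dot_self, (dist_sym C B) in R by auto.
  apply (Rmult_eq_reg_r (- dist B C + dist C A + dist A B)); [| lra].
  rewrite dot_excenter, ellipse_normal_dot_self by auto. lra.
Qed.

Lemma orbit_excenter_tangent3 : dot (ellipse_normal a b C) (excenter A B C) = 1.
Proof.
  pose proof (excenter_denom_pos _ _ _ Hnd) as Hs.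
  destruct orbit as (_ & _ & _ & HC & _ & _ & NC).
  pose proof (normal_bisects_ratio _ _ _ _ _
                (nondegenerate_rot _ _ _ (nondegenerate_rot _ _ _ Hnd)) NC) as R.
  rewrite !dot_psub_r, ellipse_normal_dot_self, (dist_sym A C) in R by auto.
  apply (Rmult_eq_reg_r (- dist B C + dist C A + dist A B)); [| lra].
  rewrite dot_excenter, ellipse_normal_dot_self by auto. lra.
Qed.

Lemma orbit_excenter_normal : cross (ellipse_normal a b A) (psub (excenter A B C) A) = 0.
Proof.
  destruct orbit as (_ & _ & _ & _ & NA & _ & _).
  rewrite excenter_sub_vertex, cross_pscale_r by exact Hnd.
  unfold normal_bisects in NA. rewrite NA. ring.
Qed.

End OrbitExcenter.

Section OrbitChords.

Variables a b : R.
Hypotheses (Ha : 0 < a) (Hb : 0 < b).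
Variables P1 P2 P3 : pt.
Hypothesis orbit : is_3_periodic a b P1 P2 P3.

Let Hnd : nondegenerate P1 P2 P3. Proof. apply orbit. Qed.
Let O1 : on_ellipse a b P1. Proof. apply orbit. Qed.
Let O2 : on_ellipse a b P2. Proof. apply orbit. Qed.
Let O3 : on_ellipse a b P3. Proof. apply orbit. Qed.
Let N21 : P2 <> P1. Proof. exact (nondegenerate_neq21 _ _ _ Hnd). Qed.
Let N31 : P3 <> P1. Proof. exact (nondegenerate_neq31 _ _ _ Hnd). Qed.
Let N32 : P3 <> P2. Proof. exact (nondegenerate_neq21 _ _ _ (nondegenerate_rot _ _ _ Hnd)). Qed.

(* The bisector property at [P1] and [P2], together with [chord_normal_sym], makes the ratio
   [dot n_i (P_j - P_i) / |P_j - P_i|] the same for the three sides. *)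
Let c := dot (ellipse_normal a b P1) (psub P2 P1) / dist P2 P1.

Let side12 : dot (ellipse_normal a b P1) (psub P2 P1) = c * dist P2 P1.
Proof. pose proof (dist_pos _ _ N21). unfold c. field. lra. Qed.

Let side13 : dot (ellipse_normal a b P1) (psub P3 P1) = c * dist P3 P1.
Proof.
  pose proof (dist_pos _ _ N21).
  destruct orbit as (_ & _ & _ & _ & B1 & _ & _).
  pose proof (normal_bisects_ratio _ _ _ _ _ Hnd B1) as R.
  apply (Rmult_eq_reg_r (dist P2 P1)); [| lra].
  unfold c. replace (_ / dist P2 P1 * dist P3 P1 * dist P2 P1)
    with (dot (ellipse_normal a b P1) (psub P2 P1) * dist P3 P1) by (field; lra).
  lra.
Qed.

Let side23 : dot (ellipse_normal a b P2) (psub P3 P2) = c * dist P3 P2.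
Proof.
  pose proof (dist_pos _ _ N21).
  destruct orbit as (_ & _ & _ & _ & _ & B2 & _).
  pose proof (normal_bisects_ratio _ _ _ _ _ (nondegenerate_rot _ _ _ Hnd) B2) as R.
  rewrite (chord_normal_sym a b Ha Hb P2 P1), (dist_sym P1 P2) in R by auto.
  apply (Rmult_eq_reg_r (dist P2 P1)); [| lra].
  unfold c. replace (_ / dist P2 P1 * dist P3 P2 * dist P2 P1)
    with (dot (ellipse_normal a b P1) (psub P2 P1) * dist P3 P2) by (field; lra).
  lra.
Qed.

Let c_neq0 : c <> 0.
Proof.
  intros Hc. apply N21, (eq_of_on_ellipse_tangent a b Ha Hb); auto.
  pose proof side12 as S.
  rewrite Hc, Rmult_0_l, dot_psub_r, ellipse_normal_dot_self in S by auto.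
  rewrite (ellipse_normal_dot_sym a b Ha Hb P2 P1). lra.
Qed.

Let c_sqr_pos : 0 < c * c.
Proof. exact (Rsqr_pos_lt _ c_neq0). Qed.

Let c_sqr_quadratic :
  (a ^ 2 - b ^ 2) ^ 2 * (c * c) ^ 2 + 2 * (a ^ 2 + b ^ 2) * (c * c) - 3 = 0.
Proof.
  set (u := c * c) in *.
  pose proof (on_ellipse_normalize a b Ha Hb P1 O1) as U1.
  pose proof (on_ellipse_normalize a b Ha Hb P2 O2) as U2.
  pose proof (on_ellipse_normalize a b Ha Hb P3 O3) as U3.
  pose proof (chord_normal_stretch a b Ha Hb u P1 P2 O1 O2 (not_eq_sym N21)
                (sqr_of_eq_mul_dist _ _ _ _ side12)) as S12.
  pose proof (chord_normal_stretch a b Ha Hb u P1 P3 O1 O3 (not_eq_sym N31)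
                (sqr_of_eq_mul_dist _ _ _ _ side13)) as S13.
  pose proof (chord_normal_stretch a b Ha Hb u P2 P3 O2 O3 (not_eq_sym N32)
                (sqr_of_eq_mul_dist _ _ _ _ side23)) as S23.
  pose proof (stretch_three_points _ _ _ _ _ U1 U2 U3
                (normalize_neq a b Ha Hb _ _ (not_eq_sym N32)) S12 S13 S23) as H.
  pose proof (stretch_self_gt a b u _ Ha Hb c_sqr_pos U1).
  apply Rmult_integral in H as [H | H]; [| lra].
  transitivity (- (1 - u * (a ^ 2 - b ^ 2) * (u * (a ^ 2 - b ^ 2))
                   + 2 * (1 - u * (a ^ 2 + b ^ 2))));
    [ring | rewrite H; ring].
Qed.

Lemma orbit_chord_ratio :
  dot (psub P2 P1) (psub P2 P1)
  = cosine_radius_sq a b * (dot (ellipse_normal a b P1) (psub P2 P1)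
                            * dot (ellipse_normal a b P1) (psub P2 P1)).
Proof.
  rewrite (sqr_of_eq_mul_dist _ _ _ _ side12).
  pose proof (cosine_radius_sq_inv a b Hb _ c_sqr_pos c_sqr_quadratic) as Hinv.
  transitivity ((c * c * cosine_radius_sq a b) * dot (psub P2 P1) (psub P2 P1));
    [rewrite Hinv |]; ring.
Qed.

End OrbitChords.

Section ExcentralTriangle.

Variables a b : R.
Hypotheses (Ha : 0 < a) (Hb : 0 < b).
Variables P1 P2 P3 : pt.
Hypothesis orbit : is_3_periodic a b P1 P2 P3.

Let orbit2 : is_3_periodic a b P2 P3 P1. Proof. apply is_3_periodic_rot, orbit. Qed.
Let orbit3 : is_3_periodic a b P3 P1 P2. Proof. apply is_3_periodic_rot, orbit2. Qed.

Let O1 : on_ellipse a b P1. Proof. apply orbit. Qed.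
Let O2 : on_ellipse a b P2. Proof. apply orbit. Qed.
Let O3 : on_ellipse a b P3. Proof. apply orbit. Qed.
Let N12 : P1 <> P2. Proof. apply not_eq_sym, (nondegenerate_neq21 _ _ _ (proj1 orbit)). Qed.
Let N23 : P2 <> P3. Proof. apply not_eq_sym, (nondegenerate_neq21 _ _ _ (proj1 orbit2)). Qed.
Let N31 : P3 <> P1. Proof. apply not_eq_sym, (nondegenerate_neq21 _ _ _ (proj1 orbit3)). Qed.

Local Notation E1 := (excenter P1 P2 P3).
Local Notation E2 := (excenter P2 P3 P1).
Local Notation E3 := (excenter P3 P1 P2).
Local Notation n1 := (ellipse_normal a b P1).
Local Notation n2 := (ellipse_normal a b P2).
Local Notation n3 := (ellipse_normal a b P3).

Let T21 : dot n2 E1 = 1. Proof. exact (orbit_excenter_tangent2 _ _ _ _ _ Ha Hb orbit). Qed.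
Let T31 : dot n3 E1 = 1. Proof. exact (orbit_excenter_tangent3 _ _ _ _ _ Ha Hb orbit). Qed.
Let T32 : dot n3 E2 = 1. Proof. exact (orbit_excenter_tangent2 _ _ _ _ _ Ha Hb orbit2). Qed.
Let T12 : dot n1 E2 = 1. Proof. exact (orbit_excenter_tangent3 _ _ _ _ _ Ha Hb orbit2). Qed.
Let T13 : dot n1 E3 = 1. Proof. exact (orbit_excenter_tangent2 _ _ _ _ _ Ha Hb orbit3). Qed.
Let T23 : dot n2 E3 = 1. Proof. exact (orbit_excenter_tangent3 _ _ _ _ _ Ha Hb orbit3). Qed.
Let C1 : cross n1 (psub E1 P1) = 0. Proof. exact (orbit_excenter_normal _ _ _ _ _ orbit). Qed.
Let C2 : cross n2 (psub E2 P2) = 0. Proof. exact (orbit_excenter_normal _ _ _ _ _ orbit2). Qed.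
Let C3 : cross n3 (psub E3 P3) = 0. Proof. exact (orbit_excenter_normal _ _ _ _ _ orbit3). Qed.

Let NE12 : E1 <> E2.
Proof.
  intros H. apply N12, (eq_of_tangent_normal a b Ha Hb _ _ E1); auto. rewrite H. exact T12.
Qed.
Let NE23 : E2 <> E3.
Proof.
  intros H. apply N23, (eq_of_tangent_normal a b Ha Hb _ _ E2); auto. rewrite H. exact T23.
Qed.
Let NE31 : E3 <> E1.
Proof.
  intros H. apply N31, (eq_of_tangent_normal a b Ha Hb _ _ E3); auto. rewrite H. exact T31.
Qed.

Lemma excentral_orthic :
  foot E1 E2 E3 = P1 /\ foot E2 E3 E1 = P2 /\ foot E3 E1 E2 = P3.
Proof.
  repeat split; [apply (foot_eq_of_tangent n1) | apply (foot_eq_of_tangent n2)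
                | apply (foot_eq_of_tangent n3)];
    auto using ellipse_normal_nonzero, ellipse_normal_dot_self.
Qed.

Lemma excentral_symmedian : symmedian E1 E2 E3 = (0, 0).
Proof.
  destruct excentral_orthic as (F1 & F2 & F3).
  assert (K1 : cross (symmedian E1 E2 E3) E1 = 0).
  { apply (cross_eq0_of_line_through_origin _ _ (psub (padd P2 P3) (pscale 2 E1))).
    - apply (midpoint_neq_pole a b Ha Hb); auto.
    - pose proof (symmedian_bisects_feet_chord E1 E2 E3) as S. rewrite F2, F3 in S. auto.
    - apply cross_psub_pscale_self, (pole_midpoint_collinear a b Ha Hb); auto. }
  assert (K2 : cross (symmedian E1 E2 E3) E2 = 0).
  { rewrite <- symmedian_rot.
    apply (cross_eq0_of_line_through_origin _ _ (psub (padd P3 P1) (pscale 2 E2))).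
    - apply (midpoint_neq_pole a b Ha Hb); auto.
    - pose proof (symmedian_bisects_feet_chord E2 E3 E1) as S. rewrite F3, F1 in S. auto.
    - apply cross_psub_pscale_self, (pole_midpoint_collinear a b Ha Hb); auto. }
  apply (origin_of_cross_eq0 _ E1 E2 K1 K2).
  intros H. apply NE12, (eq_of_dot_eq1_cross n3); auto.
Qed.

Lemma excentral_cosine_circle :
  is_cosine_circle E1 E2 E3 (0, 0) (sqrt (cosine_radius_sq a b)).
Proof.
  pose proof (cosine_radius_sq_pos a b Hb) as HR.
  pose proof (orbit_chord_ratio a b Ha Hb _ _ _ orbit) as R12.
  pose proof (orbit_chord_ratio a b Ha Hb _ _ _ orbit2) as R23.
  pose proof (orbit_chord_ratio a b Ha Hb _ _ _ orbit3) as R31.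
  destruct excentral_orthic as (F1 & F2 & F3).
  unfold is_cosine_circle; cbv zeta. rewrite F1, F2, F3, excentral_symmedian.
  refine (conj eq_refl (conj _ (conj _ (conj _ (conj _ (conj _ _))))));
    [apply (meets_on_circle_origin n3) | apply (meets_on_circle_origin n2)
     | apply (meets_on_circle_origin n1) | apply (meets_on_circle_origin n3)
     | apply (meets_on_circle_origin n2) | apply (meets_on_circle_origin n1)];
    auto using chord_ratio_swap.
Qed.

End ExcentralTriangle.

Theorem theorem4 (a b : R) (hb : 0 < b) (hab : b < a) :
  exists r : R, a < r /\
    forall P1 P2 P3 : pt, is_3_periodic a b P1 P2 P3 ->
      is_cosine_circle (excenter P1 P2 P3) (excenter P2 P3 P1) (excenter P3 P1 P2)
        (0, 0) r.
Proof.
  assert (ha : 0 < a) by lra.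
  exists (sqrt (cosine_radius_sq a b)). split.
  - rewrite <- (sqrt_pow2 a) at 1 by lra.
    apply sqrt_lt_1_alt. split; [apply pow2_ge_0 | apply cosine_radius_sq_gt, hb].
  - intros P1 P2 P3 orbit. exact (excentral_cosine_circle a b ha hb P1 P2 P3 orbit).
Qed.
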